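(* For every integer $m\ge2$ and every $\alpha\in[0,1]$, the randomized rule \textsc{SmartDictatorship} (with parameter $\alpha$) has distortion at most $2+\alpha-2/m$ on $\alpha$-decisive metric spaces.
   Context: An election: voters $V=\{1,\dots,n\}$, a fixed finite set $C$ of $m$ candidates, a profile of linear orders over $C$; $\mathrm{top}(i)$ is $i$'s first choice; $\mathrm{plu}(a)=|\{i:\mathrm{top}(i)=a\}|$. A distance function $d$ on $V\cup C$ is nonnegative, symmetric and satisfies the triangle inequality (co-location allowed); consistent with the profile if $d(i,c)\le d(i,c')$ whenever $i$ ranks $c$ above $c'$; $\alpha$-decisive if $d(i,\mathrm{top}(i))\le\alpha\,d(i,c)$ for all $i$ and $c\ne\mathrm{top}(i)$. $\mathrm{SC}(c)=\sum_i d(i,c)$. The distortion of a randomized rule $f$ on $\alpha$-decisive spaces is $\sup_\sigma\sup_d \mathbb{E}[\mathrm{SC}(f(\sigma))]/\min_c\mathrm{SC}(c)$ over $\alpha$-decisive consistent $d$. \textsc{SmartDictatorship}: if some candidate $a$ has $\mathrm{plu}(a)\ge(1+\alpha)n/2$, it chooses one such candidate (arbitrarily) with probability $1$; otherwise it chooses each candidate $a$ with probability proportional to $\mathrm{plu}(a)/\bigl(n-\frac{2}{1+\alpha}\mathrm{plu}(a)\bigr)$. *)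

From HB Require Import structures.
From mathcomp Require Import all_boot all_order all_algebra all_fingroup.
Set Implicit Arguments. Unset Strict Implicit. Unset Printing Implicit Defensive.
Import Order.TTheory GRing.Theory Num.Theory.
Local Open Scope ring_scope.

(* Voters are 'I_n, candidates are 'I_m.
   A profile is rk : 'I_n -> {perm 'I_m}; rk i c is the position of candidate c
   in voter i's ranking (position 0 = first choice).  Points of the space V \cup C are 'I_n + 'I_m. *)

Definition profile (n m : nat) := 'I_n -> {perm 'I_m}.

Definition ranks_above n m (rk : profile n m) (i : 'I_n) (c c' : 'I_m) : bool :=
  (rk i c < rk i c')%N.

Definition is_top n m (rk : profile n m) (i : 'I_n) (c : 'I_m) : bool :=
  (rk i c == 0%N :> nat).

Definition plu n m (rk : profile n m) (a : 'I_m) : nat :=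
  #|[set i : 'I_n | is_top rk i a]|.

Definition is_distance (R : realFieldType) (X : Type) (d : X -> X -> R) : Prop :=
  [/\ forall x, d x x = 0,
      forall x y, 0 <= d x y,
      forall x y, d x y = d y x
    & forall x y z, d x z <= d x y + d y z].

Definition consistent (R : realFieldType) n m (rk : profile n m)
  (d : 'I_n + 'I_m -> 'I_n + 'I_m -> R) : Prop :=
  forall i c c', ranks_above rk i c c' -> d (inl i) (inr c) <= d (inl i) (inr c').

Definition decisive (R : realFieldType) (alpha : R) n m (rk : profile n m)
  (d : 'I_n + 'I_m -> 'I_n + 'I_m -> R) : Prop :=
  forall i c c', is_top rk i c -> c' != c ->
    d (inl i) (inr c) <= alpha * d (inl i) (inr c').

Definition SC (R : realFieldType) n m (d : 'I_n + 'I_m -> 'I_n + 'I_m -> R)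
  (c : 'I_m) : R := \sum_(i < n) d (inl i) (inr c).

Definition sd_weight (R : realFieldType) (alpha : R) n m (rk : profile n m)
  (a : 'I_m) : R :=
  (plu rk a)%:R / (n%:R - 2 / (1 + alpha) * (plu rk a)%:R).

Definition smart_dictatorship (R : realFieldType) (alpha : R) n m
  (rk : profile n m) (p : 'I_m -> R) : Prop :=
  (exists a, (1 + alpha) * n%:R / 2 <= (plu rk a)%:R /\
             forall b, p b = (b == a)%:R)
  \/
  ((forall a, (plu rk a)%:R < (1 + alpha) * n%:R / 2) /\
   forall b, p b = sd_weight alpha rk b / \sum_(a < m) sd_weight alpha rk a).

From HB Require Import structures.
From mathcomp Require Import all_boot all_order all_algebra all_fingroup.
From mathcomp Require Import ring lra.
Set Implicit Arguments.
Unset Strict Implicit.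
Unset Printing Implicit Defensive.
Import Order.TTheory GRing.Theory Num.Theory.
Local Open Scope ring_scope.

(* Fix a candidate c and let X_a be the part of SC(c) borne by the voters
   ranking a first.  Triangle inequalities through those voters together with
   alpha-decisiveness give, for a <> c,
     plu(a) SC(a) <= plu(a) SC(c) + ((1 + alpha) n - 2 plu(a)) X_a.
   If a dictator a exists the last coefficient is nonpositive, so
   SC(a) <= SC(c).  Otherwise that coefficient is (1 + alpha) times the
   denominator y_a = n - 2 plu(a) / (1 + alpha) of the SmartDictatorship
   weight, so dividing by y_a and summing bounds the expected cost by
   SC(c) (1 + (1 + alpha) / W), W the total weight; the AM-HM inequality for
   the y_a (whose sum is n (m - 2 / (1 + alpha))) gives
   W (m - 2 / (1 + alpha)) >= m, which is exactly the bound 2 + alpha - 2/m. *)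

Section Means.
Variable R : realFieldType.

Lemma card_sqr_le_sum_mul_sumV (I : finType) (y : I -> R) :
  (forall i, 0 < y i) -> #|I|%:R ^+ 2 <= (\sum_i y i) * \sum_i (y i)^-1.
Proof.
move=> y_gt0.
have ratio_ge2 i j : 2 <= y i / y j + y j / y i.
  rewrite -subr_ge0.
  have -> : y i / y j + y j / y i - 2 = (y i - y j) ^+ 2 / (y i * y j).
    by field; rewrite !gt_eqF.
  by rewrite divr_ge0 ?sqr_ge0 // ltW // mulr_gt0.
have -> : (\sum_i y i) * \sum_i (y i)^-1 = \sum_i \sum_j y i / y j.
  by rewrite mulr_suml; apply: eq_bigr => i _; rewrite mulr_sumr.
have F_sym : \sum_i \sum_j y i / y j = \sum_i \sum_j y j / y i by rewrite exchange_big.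
have : \sum_(i : I) \sum_(j : I) 2 <= 2 * \sum_i \sum_j y i / y j.
  rewrite mulr_natl [X in _ <= X]mulr2n {2}F_sym -big_split; apply: ler_sum => i _.
  by rewrite -big_split; apply: ler_sum => j _; exact: ratio_ge2.
have -> : \sum_(i : I) \sum_(j : I) 2 = 2 * #|I|%:R ^+ 2 :> R.
  by rewrite !sumr_const -mulrnA -natrX mulr_natr mulnn.
by rewrite ler_pM2l.
Qed.

Lemma card_le_sum_ratio (I : finType) (n b : R) (P : I -> R) :
  0 < b -> \sum_i P i = n -> (forall i, 0 < n - b * P i) ->
  #|I|%:R <= (\sum_i P i / (n - b * P i)) * (#|I|%:R - b).
Proof.
move=> b_gt0 sum_P y_gt0; set k : R := #|I|%:R.
have sum_y : \sum_i (n - b * P i) = n * (k - b).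
  by rewrite sumrB sumr_const -mulr_sumr sum_P -mulr_natr mulrBr [b * n]mulrC.
have b_sum_ratio : b * \sum_i P i / (n - b * P i) = n * \sum_i (n - b * P i)^-1 - k.
  rewrite mulr_sumr mulr_sumr -[k]sumr_const -sumrB; apply: eq_bigr => i _.
  by field; rewrite gt_eqF.
have := card_sqr_le_sum_mul_sumV y_gt0; rewrite sum_y -/k => hm.
rewrite -subr_ge0 -(pmulr_rge0 _ b_gt0) mulrBr mulrA b_sum_ratio.
have -> : (n * \sum_i (n - b * P i)^-1 - k) * (k - b) - b * k
          = n * (k - b) * \sum_i (n - b * P i)^-1 - k ^+ 2 by ring.
by rewrite subr_ge0.
Qed.

Lemma weighted_mean_le (I : finType) (alpha n S : R) (P X C w : I -> R) :
  (1 < #|I|)%N -> 0 <= alpha -> 0 <= S ->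
  \sum_i P i = n -> \sum_i X i = S -> (forall i, 0 <= P i) ->
  (forall i, 2 * P i < (1 + alpha) * n) ->
  (forall i, P i * C i <= P i * S + ((1 + alpha) * n - 2 * P i) * X i) ->
  (forall i, w i = P i / (n - 2 / (1 + alpha) * P i)) ->
  \sum_i w i / (\sum_j w j) * C i <= (2 + alpha - 2 / #|I|%:R) * S.
Proof.
move=> I_gt1 alpha_ge0 S_ge0 sum_P sum_X P_ge0 P_lt C_le wE.
set k : R := #|I|%:R; set W := \sum_j w j; set b := 2 / (1 + alpha).
have alpha1_gt0 : 0 < 1 + alpha by lra.
have k_gt0 : 0 < k by rewrite ltr0n (ltn_trans _ I_gt1).
have alpha_y i : (1 + alpha) * (n - b * P i) = (1 + alpha) * n - 2 * P i.
  by rewrite /b; field; rewrite gt_eqF.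
have y_gt0 i : 0 < n - b * P i.
  by rewrite -(pmulr_rgt0 _ alpha1_gt0) alpha_y subr_gt0.
have W_bound : k <= W * (k - b).
  rewrite /W; under eq_bigr do rewrite wE.
  exact: card_le_sum_ratio (divr_gt0 _ alpha1_gt0) sum_P y_gt0.
have W_gt0 : 0 < W.
  rewrite lt0r sumr_ge0 ?andbT => [|i _]; last by rewrite wE divr_ge0 // ltW.
  by apply: contraTneq W_bound => ->; rewrite mul0r -ltNge.
have wC_le : \sum_i w i * C i <= W * S + (1 + alpha) * S.
  rewrite -{2}sum_X mulr_sumr /W mulr_suml -big_split; apply: ler_sum => i _ /=.
  have := C_le i; rewrite -alpha_y => C_le_i.
  rewrite wE mulrAC.
  have -> : P i / (n - b * P i) * S + (1 + alpha) * X i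
      = (P i * S + (1 + alpha) * (n - b * P i) * X i) / (n - b * P i).
    by field; rewrite gt_eqF.
  by rewrite ler_pM2r ?invr_gt0 // mulrA.
have W_coef : (1 + alpha - 2 / k) * W - (1 + alpha) = (1 + alpha) / k * (W * (k - b) - k).
  by rewrite /b; field; rewrite !gt_eqF.
have -> : \sum_i w i / W * C i = (\sum_i w i * C i) / W.
  by rewrite mulr_suml; apply: eq_bigr => i _; rewrite mulrAC.
have : 0 <= S * ((1 + alpha - 2 / k) * W - (1 + alpha)).
  by rewrite W_coef mulr_ge0 // mulr_ge0 ?subr_ge0 // divr_ge0 // ltW.
rewrite ler_pdivrMr //; lra.
Qed.

End Means.

Section Supporters.
Variables (n m : nat) (rk : profile n m).

Definition supporters (a : 'I_m) : {set 'I_n} := [set i | is_top rk i a].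

Hypothesis m_gt0 : (0 < m)%N.

Definition top (i : 'I_n) : 'I_m := (rk i)^-1%g (Ordinal m_gt0).

Lemma is_topE i a : is_top rk i a = (top i == a).
Proof.
rewrite /is_top /top eq_sym (can2_eq (permKV (rk i)) (permK (rk i))).
by rewrite -(inj_eq val_inj).
Qed.

Lemma sum_supporters (V : nmodType) (F : 'I_n -> V) :
  \sum_a \sum_(i in supporters a) F i = \sum_i F i.
Proof.
rewrite (partition_big top predT) //; apply: eq_bigr => a _.
by apply: eq_bigl => i; rewrite inE is_topE.
Qed.

Lemma sum_plu : \sum_a plu rk a = n.
Proof.
under eq_bigr do rewrite /plu -/(supporters _) -sum1_card.
by rewrite sum_supporters sum1_card card_ord.
Qed.

End Supporters.

Section SocialCost.
Variables (R : realFieldType) (alpha : R) (n m : nat) (rk : profile n m).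
Variable d : 'I_n + 'I_m -> 'I_n + 'I_m -> R.
Hypotheses (d_dist : is_distance d) (d_dec : decisive alpha rk d).

Definition SC_in (A : {set 'I_n}) (c : 'I_m) : R := \sum_(i in A) d (inl i) (inr c).

Lemma SC_ge0 c : 0 <= SC d c.
Proof. by case: d_dist => _ d_ge0 _ _; apply: sumr_ge0. Qed.

Lemma SC_in_ge0 A c : 0 <= SC_in A c.
Proof. by case: d_dist => _ d_ge0 _ _; apply: sumr_ge0. Qed.

Lemma SC_split A c : SC d c = SC_in A c + SC_in (~: A) c.
Proof.
rewrite /SC /SC_in (bigID (mem A)) /=; congr (_ + _).
by apply: eq_bigl => i; rewrite in_setC.
Qed.

Lemma SC_in_le A a c : SC_in A a <= SC_in A c + #|A|%:R * d (inr c) (inr a).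
Proof.
case: d_dist => _ _ _ d_tri.
by rewrite mulr_natl -sumr_const -big_split; apply: ler_sum => i _; exact: d_tri.
Qed.

Lemma SC_in_supporters_le a c : c != a ->
  SC_in (supporters rk a) a <= alpha * SC_in (supporters rk a) c.
Proof.
move=> ca; rewrite mulr_sumr; apply: ler_sum => i.
by rewrite inE => top_a; exact: d_dec.
Qed.

Lemma plu_dist_le a c : c != a ->
  (plu rk a)%:R * d (inr c) (inr a) <= (1 + alpha) * SC_in (supporters rk a) c.
Proof.
case: d_dist => _ _ d_sym d_tri ca.
rewrite mulr_natl -sumr_const mulr_sumr; apply: ler_sum => i; rewrite inE => top_a.
apply: (le_trans (d_tri _ (inl i) _)); rewrite d_sym mulrDl mul1r lerD2l.
exact: d_dec.
Qed.

Lemma plu_SC_le a c : c != a ->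
  (plu rk a)%:R * SC d a
    <= (plu rk a)%:R * SC d c
       + ((1 + alpha) * n%:R - 2 * (plu rk a)%:R) * SC_in (supporters rk a) c.
Proof.
move=> ca; set P := (plu rk a)%:R; set S := supporters rk a.
set Q : R := #|~: S|%:R; set D := d (inr c) (inr a).
have n_split : n%:R = P + Q by rewrite -natrD cardsC card_ord.
have SC_a_le : SC d a <= alpha * SC_in S c + (SC_in (~: S) c + Q * D).
  by rewrite (SC_split S) lerD ?SC_in_supporters_le ?SC_in_le.
have P_SC_a_le := ler_wpM2l (ler0n R (plu rk a)) SC_a_le.
have PD_le := ler_wpM2l (ler0n R #|~: S|) (plu_dist_le ca).
rewrite -/P -/S -/Q -/D in P_SC_a_le PD_le.
rewrite [SC d c](SC_split S) n_split; lra.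
Qed.

Hypothesis alpha_ge0 : 0 <= alpha.

Lemma dictator_SC_le a c :
  (1 + alpha) * n%:R / 2 <= (plu rk a)%:R -> SC d a <= SC d c.
Proof.
move=> plu_a; have [-> // | ca] := eqVneq c a.
have coef_le0 : (1 + alpha) * n%:R - 2 * (plu rk a)%:R <= 0 by lra.
have P_SC_le : (plu rk a)%:R * SC d a <= (plu rk a)%:R * SC d c.
  by apply: le_trans (plu_SC_le ca) _; rewrite gerDl mulr_le0_ge0 ?SC_in_ge0.
have [plu0 | plu_neq0] := eqVneq (plu rk a) 0%N; last first.
  by rewrite -(ler_pM2l (_ : 0 < (plu rk a)%:R)) // ltr0n lt0n.
have n0 : n = 0%N.
  have : (1 + alpha) * n%:R <= 0 by move: plu_a; rewrite plu0; lra.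
  by rewrite pmulr_rle0 ?lern0 => [/eqP // | ]; apply: ltr_wpDr.
by rewrite /SC big1 ?SC_ge0 // => -[i i_lt]; exfalso; rewrite n0 in i_lt.
Qed.

Lemma lottery_SC_le c : (1 < m)%N ->
  (forall a, (plu rk a)%:R < (1 + alpha) * n%:R / 2) ->
  \sum_a sd_weight alpha rk a / (\sum_b sd_weight alpha rk b) * SC d a
    <= (2 + alpha - 2 / m%:R) * SC d c.
Proof.
move=> m_gt1 plu_lt.
have m_gt0 : (0 < m)%N by apply: ltn_trans m_gt1.
have := @weighted_mean_le R 'I_m alpha n%:R (SC d c) (fun a => (plu rk a)%:R)
  (fun a => SC_in (supporters rk a) c) (SC d) (sd_weight alpha rk).
rewrite card_ord; apply => //.
- exact: SC_ge0.
- by rewrite -natr_sum sum_plu.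
- exact: sum_supporters.
- by move=> a; have := plu_lt a; lra.
move=> a; have [<- | ca] := eqVneq c a; last exact: plu_SC_le.
rewrite lerDl mulr_ge0 ?SC_in_ge0 //; have := plu_lt c; lra.
Qed.

End SocialCost.

Lemma distortion_bound_ge1 (R : realFieldType) (alpha : R) (m : nat) :
  (2 <= m)%N -> 0 <= alpha -> 1 <= 2 + alpha - 2 / m%:R.
Proof.
move=> m_ge2 alpha_ge0.
have : 2 / m%:R <= 1 :> R by rewrite ler_pdivrMr ?ltr0n ?mul1r ?ler_nat // (ltn_trans _ m_ge2).
lra.
Qed.

Theorem theorem3 (R : realFieldType) (m : nat) (alpha : R) :
  (2 <= m)%N -> 0 <= alpha <= 1 ->
  forall (n : nat) (rk : profile n m) (d : 'I_n + 'I_m -> 'I_n + 'I_m -> R),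
    is_distance d -> consistent rk d -> decisive alpha rk d ->
    forall p : 'I_m -> R, smart_dictatorship alpha rk p ->
    forall c : 'I_m,
      \sum_(a < m) p a * SC d a <= (2 + alpha - 2 / m%:R) * SC d c.
Proof.
move=> m_ge2 /andP[alpha_ge0 _] n rk d d_dist _ d_dec p.
case=> [[a [plu_a pE]] | [plu_lt pE]] c.
- have -> : \sum_(b < m) p b * SC d b = SC d a.
    rewrite (bigD1 a) //= pE eqxx mul1r big1 ?addr0 // => b ba.
    by rewrite pE (negbTE ba) mul0r.
  apply: le_trans (dictator_SC_le d_dist d_dec alpha_ge0 c plu_a) _.
  exact: ler_peMl (SC_ge0 d_dist c) (distortion_bound_ge1 m_ge2 alpha_ge0).
- under eq_bigr do rewrite pE.
  exact: lottery_SC_le.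
Qed.
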